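(* Let $p\geq 2$, $q\geq 1$ and $k_1\geq \cdots\geq k_q\geq 1$ be fixed integers, and let $H$ be an $n$-vertex $S^{p+1}_{k_1,\dots,k_q}$-free graph with maximum spectral radius among all such graphs. Then $\rho(H)\geq \frac{p-1}{p}n+O(1)$, where the implied constant depends only on $p,q$ (and not on $n$).
   Context: $S_{k_1,\dots,k_q}$ is the vertex-disjoint union of stars with $k_1,\dots,k_q$ edges. For a graph $G$ and integer $p\ge 2$, the edge blow-up $G^{p+1}$ is obtained by replacing each edge of $G$ by a clique of order $p+1$ containing it, with all new vertices of the different cliques distinct. $\rho(H)$ is the largest eigenvalue of the adjacency matrix of $H$. *)

From HB Require Import structures.
From mathcomp Require Import all_boot all_order all_algebra.
From mathcomp Require Import boolp classical_sets reals.
Set Implicit Arguments. Unset Strict Implicit. Unset Printing Implicit Defensive.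
Import Order.TTheory GRing.Theory Num.Theory.
Local Open Scope ring_scope.
Local Open Scope classical_set_scope.

Definition simple_graph (V : finType) (e : rel V) : Prop :=
  symmetric e /\ irreflexive e.

Definition contains_copy (U V : finType) (F : rel U) (G : rel V) : Prop :=
  exists f : U -> V, injective f /\ (forall u w, F u w -> G (f u) (f w)).

Definition free_of (U V : finType) (F : rel U) (G : rel V) : Prop :=
  ~ contains_copy F G.

(* ---- The edge blow-up S^{p+1}_{k_1,...,k_q} ----
   Star i (i < q = size ks) has centre (i, None) and k_i leaves.
   Each edge {centre_i, leaf (i,j)} (j < k_i) is replaced by a clique of
   order p+1 on {centre_i} u {(i, Some (j,t)) | t < p}; the vertex with
   t = 0 is the original leaf, t = 1..p-1 are the p-1 new vertices.
   Leaf indices j range over 'I_(\max k) and are restricted to j < k_i. *)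
Definition kmax (ks : seq nat) : nat := \max_(k <- ks) k.

Definition SB_raw (ks : seq nat) (p : nat) : finType :=
  ('I_(size ks) * option ('I_(kmax ks) * 'I_p))%type.

Definition SB_valid (ks : seq nat) (p : nat) : pred (SB_raw ks p) :=
  fun v => match v.2 with
           | None => true
           | Some jt => (val jt.1 < nth 0%N ks (val v.1))%N
           end.

Definition SB_vert (ks : seq nat) (p : nat) : finType :=
  {v : SB_raw ks p | SB_valid v}.

Definition SB_edge (ks : seq nat) (p : nat) : rel (SB_vert ks p) :=
  fun u w =>
    let u := val u in let w := val w in
    (u.1 == w.1) &&
    match u.2, w.2 with
    | None, None => false
    | None, Some _ => true
    | Some _, None => true
    | Some jt, Some jt' => (jt.1 == jt'.1) && (jt.2 != jt'.2)
    end.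

Definition adjmx (R : realType) (n : nat) (G : rel 'I_n) : 'M[R]_n :=
  \matrix_(i, j) (G i j)%:R.

Definition spec_rad (R : realType) (n : nat) (G : rel 'I_n) : R :=
  sup [set a : R | eigenvalue (adjmx R G) a].

(* The Turan graph that is complete p-partite on p (n %/ p) of the vertices
   is properly p-coloured, hence has no clique of order p+1, whereas every
   edge blow-up [S^{p+1}_{k_1,...,k_q}] contains one.  So it is a competitor
   of the extremal graph [H], and the indicator vector of its non-isolated
   vertices is an eigenvector for (p-1) (n %/ p) >= (p-1)/p n - p. *)
From HB Require Import structures.
From mathcomp Require Import all_boot all_order all_algebra zify.
From mathcomp Require Import boolp classical_sets reals.
Import Order.TTheory GRing.Theory Num.Theory.
Local Open Scope ring_scope.

Definition complete_graph (T : finType) : rel T := fun x y => x != y.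

Lemma contains_copy_trans {T U V : finType} {F : rel T} {G : rel U} {H : rel V} :
  contains_copy F G -> contains_copy G H -> contains_copy F H.
Proof.
move=> [f [finj fF]] [g [ginj gG]]; exists (g \o f); split.
  exact: inj_comp.
by move=> x y /fF /gG.
Qed.

Lemma free_of_contains {T U V : finType} {K : rel T} {F : rel U} {G : rel V} :
  contains_copy K F -> free_of K G -> free_of F G.
Proof. by move=> KF KG FG; apply: KG; apply: contains_copy_trans FG. Qed.

Lemma complete_free_of_colouring (U V : finType) (G : rel V) k (c : V -> 'I_k) :
  (forall x y, G x y -> c x != c y) -> (k < #|U|)%N ->
  free_of (@complete_graph U) G.
Proof.
move=> proper_c kU [f [_ fG]].
have cf_inj : injective (c \o f).
  move=> x y /= cxy; case: (eqVneq x y) => // /fG /proper_c.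
  by rewrite cxy eqxx.
by have := leq_card _ cf_inj; rewrite card_ord leqNgt kU.
Qed.

Lemma SB_contains_complete (ks : seq nat) (p : nat) {i : 'I_(size ks)} :
  (0 < nth 0%N ks i)%N -> contains_copy (@complete_graph (option 'I_p)) (@SB_edge ks p).
Proof.
move=> ki.
have kmax_gt0 : (0 < kmax ks)%N.
  by apply: leq_trans ki _; apply: leq_bigmax_seq => //; exact: mem_nth.
pose j0 : 'I_(kmax ks) := Ordinal kmax_gt0.
pose f (o : option 'I_p) : SB_vert ks p :=
  if o is Some t then exist _ (i, Some (j0, t)) ki else exist _ (i, None) isT.
exists f; split.
  by case=> [t|] [t'|] // /(congr1 (fun v => (val v).2)) => //= [[->]].
by case=> [t|] [t'|] //=; rewrite /complete_graph /SB_edge /= eqxx //= (inj_eq some_inj).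
Qed.

Section SpectralRadius.
Variables (R : realType) (n : nat) (G : rel 'I_n).

Lemma adjmx_eigenvalue_le a : eigenvalue (adjmx R G) a -> a <= n%:R.
Proof.
move/eigenvalueP => [v Hv nz].
have [i0 vi0] : exists i0 : 'I_n, v 0 i0 != 0.
  apply/not_existsP => v0; move/eqP: nz; apply; apply/matrixP => i j.
  by rewrite ord1 mxE; have := v0 j; case: eqP.
have [k _ vk_max] := @arg_maxP _ R _ i0 predT (fun i => `|v 0 i|) isT.
have vk_gt0 : 0 < `|v 0 k| by apply: lt_le_trans (vk_max i0 isT); rewrite normr_gt0.
have av_k : a * v 0 k = \sum_j v 0 j * (G j k)%:R.
  have := congr1 (fun M : 'M[R]_(1, n) => M 0 k) Hv; rewrite !mxE => <-.
  by apply: eq_bigr => j _; rewrite mxE.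
have : `|a| * `|v 0 k| <= n%:R * `|v 0 k|.
  rewrite -normrM av_k; apply: le_trans (ler_norm_sum _ _ _) _.
  rewrite -[n in n%:R]card_ord -sumr_const mulr_suml; apply: ler_sum => j _.
  rewrite normrM mul1r.
  case: (G j k); rewrite ?normr1 ?mulr1 ?normr0 ?mulr0 //; exact: vk_max.
by rewrite ler_pM2r // => /(le_trans (ler_norm a)).
Qed.

Lemma eigenvalue_le_spec_rad a : eigenvalue (adjmx R G) a -> a <= spec_rad R G.
Proof.
move=> ea; apply: ub_le_sup => //.
by exists n%:R => b /= /adjmx_eigenvalue_le.
Qed.

(* The indicator vector of [S] is an eigenvector for [d]. *)
Lemma regular_component_le_spec_rad (S : pred 'I_n) (i0 : 'I_n) (d : nat) :
  i0 \in S -> (forall i j, i \in S -> G i j -> j \in S) ->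
  (forall j, j \in S -> #|[pred i in S | G i j]| = d) ->
  d%:R <= spec_rad R G.
Proof.
move=> Si0 S_closed S_reg; apply: eigenvalue_le_spec_rad; apply/eigenvalueP.
set v_S := \row_i (i \in S)%:R : 'rV[R]_n.
exists v_S; last first.
  by apply/eqP => /rowP /(_ i0); rewrite !mxE Si0; apply/eqP; exact: oner_neq0.
apply/rowP => j; rewrite !mxE.
have -> : \sum_i v_S 0 i * (adjmx R G) i j = #|[pred i in S | G i j]|%:R.
  rewrite -sum1_card natr_sum [RHS]big_mkcond /=; apply: eq_bigr => i _.
  by rewrite !mxE inE; case: (i \in S); case: (G i j); rewrite ?mulr1 ?mulr0.
have [Sj | nSj] := boolP (j \in S); first by rewrite S_reg // mulr1.
rewrite mulr0 eq_card0 // => i; rewrite inE.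
by apply: contraNF nSj => /andP[]; exact: S_closed.
Qed.

End SpectralRadius.

Lemma spec_rad_ord0 (R : realType) (G : rel 'I_0) : spec_rad R G = 0.
Proof.
rewrite /spec_rad; have -> : [set a : R | eigenvalue (adjmx R G) a]%classic = set0.
  by apply/seteqP; split => a //= /eigenvalueP [v _]; rewrite (thinmx0 v) eqxx.
exact: sup0.
Qed.

Lemma card_ord_ltn_cond (n k : nat) (P : pred nat) : (k <= n)%N ->
  #|[pred i : 'I_n | (i < k)%N && P i]| = (\sum_(0 <= i < k) P i)%N.
Proof.
move=> kn; rewrite -sum1_card -(big_mkord (fun i => (i < k) && P i)%N (fun=> 1%N)).
rewrite (big_nat_widen 0 k n xpredT) // !big_mkcond [RHS]big_mkcond /=.
by apply: eq_bigr => i _; case: (i < k)%N; case: (P i).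
Qed.

Lemma sum_divn_neq (m p c : nat) : (c < p)%N ->
  (\sum_(0 <= i < p * m) (i %/ m != c) = (p - 1) * m)%N.
Proof.
move=> cp; have [-> | m_gt0] := posnP m; first by rewrite !muln0 big_geq.
rewrite big_nat_mul.
transitivity ((\sum_(0 <= a < p) (a != c)) * m)%N.
  rewrite big_distrl /=; apply: eq_bigr => a _.
  rewrite (@eq_big_nat _ _ _ _ _ _ (fun=> (a != c : nat))).
    by rewrite sum_nat_const_nat mulSn addnK mulnC.
  move=> i /andP[lo hi]; suff -> : (i %/ m = a)%N by [].
  by apply/eqP; rewrite eqn_leq leq_divRL // lo -ltnS ltn_divLR // hi.
congr (_ * m)%N; rewrite big_mkord (bigD1 (Ordinal cp)) //= eqxx add0n.
rewrite (eq_bigr (fun=> 1%N)) => [|a]; last by rewrite -val_eqE => /negbTE ->.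
by rewrite sum1_card cardC1 card_ord subn1.
Qed.

(* Vertex [i < p * (n %/ p)] lies in part [i %/ (n %/ p)]; the remaining
   [n %% p] vertices are isolated. *)
Definition turan_graph (n p : nat) : rel 'I_n := fun i j =>
  [&& (i < p * (n %/ p))%N, (j < p * (n %/ p))%N & (i %/ (n %/ p) != j %/ (n %/ p))%N].

Lemma turan_graph_simple (n p : nat) : simple_graph (turan_graph n p).
Proof.
split; first by move=> i j; rewrite /turan_graph andbCA eq_sym.
by move=> i; rewrite /turan_graph eqxx !andbF.
Qed.

Lemma turan_graph_complete_free (n p : nat) (p_gt0 : (0 < p)%N) :
  free_of (@complete_graph (option 'I_p)) (turan_graph n p).
Proof.
set m := (n %/ p)%N.
pose part (i : 'I_n) : 'I_p := insubd (Ordinal p_gt0) (i %/ m)%N.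
have part_val (i : 'I_n) : (i < p * m)%N -> val (part i) = (i %/ m)%N.
  move=> ipm; have m_gt0 : (0 < m)%N.
    by rewrite lt0n; apply: contraTneq ipm => ->; rewrite muln0.
  by rewrite val_insubd ltn_divLR // ipm.
apply: (@complete_free_of_colouring _ _ _ _ part).
  by move=> i j /and3P[ipm jpm]; rewrite -val_eqE /= !part_val //.
by rewrite card_option card_ord.
Qed.

Lemma turan_graph_deg (n p : nat) (j : 'I_n) : (j < p * (n %/ p))%N ->
  #|[pred i in [pred i : 'I_n | (i < p * (n %/ p))%N] | turan_graph n p i j]|
    = ((p - 1) * (n %/ p))%N.
Proof.
move=> jpm; set m := (n %/ p)%N in jpm *.
have pm_n : (p * m <= n)%N by rewrite mulnC leq_divM.
have m_gt0 : (0 < m)%N by rewrite lt0n; apply: contraTneq jpm => ->; rewrite muln0.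
rewrite -(@sum_divn_neq m p (j %/ m)); last by rewrite ltn_divLR // mulnC.
rewrite -(@card_ord_ltn_cond _ _ (fun i => i %/ m != j %/ m)%N pm_n).
by apply: eq_card => i; rewrite !inE /turan_graph -/m jpm; case: (i < p * m)%N.
Qed.

Lemma turan_graph_spec_rad_ge (R : realType) (n p : nat) :
  ((p - 1) * (n %/ p))%:R <= spec_rad R (turan_graph n p).
Proof.
case: n => [|n]; first by rewrite div0n muln0 spec_rad_ord0.
have [m0 | m_gt0] := posnP (n.+1 %/ p).
  rewrite m0 muln0; apply: (@regular_component_le_spec_rad _ _ _ predT ord0) => // j _.
  by apply: eq_card0 => i; rewrite !inE /turan_graph m0 muln0.
have pm_gt0 : (0 < p * (n.+1 %/ p))%N.
  by rewrite muln_gt0 m_gt0 andbT lt0n; apply: contraTneq m_gt0 => ->; rewrite divn0.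
pose S := [pred i : 'I_n.+1 | (i < p * (n.+1 %/ p))%N].
apply: (@regular_component_le_spec_rad _ _ _ S ord0).

- by rewrite inE.
- by move=> i j _ /and3P[].
- exact: turan_graph_deg.
Qed.

Lemma mul_divn_lower_bound (R : numFieldType) (n p : nat) : (0 < p)%N ->
  (p - 1)%:R / p%:R * n%:R - p%:R <= ((p - 1) * (n %/ p))%:R :> R.
Proof.
move=> p_gt0; rewrite lerBlDr mulrAC -natrM ler_pdivrMr ?ltr0n //.
rewrite -natrD -natrM ler_nat.
have := divn_eq n p; have := ltn_pmod n p_gt0.
move: (n %/ p)%N (n %% p)%N => m r; nia.
Qed.

Theorem lemma3p1 (R : realType) (p q : nat) :
  (2 <= p)%N -> (1 <= q)%N ->
  exists C : R,
    forall (ks : seq nat) (n : nat) (H : rel 'I_n),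
      size ks = q ->
      sorted geq ks ->
      all (fun k => 0 < k)%N ks ->
      simple_graph H ->
      free_of (@SB_edge ks p) H ->
      (forall G : rel 'I_n, simple_graph G -> free_of (@SB_edge ks p) G ->
         spec_rad R G <= spec_rad R H) ->
      (p - 1)%:R / p%:R * n%:R - C <= spec_rad R H.
Proof.
move=> p_ge2 q_gt0; exists p%:R => ks n H size_ks _ ks_gt0 _ _ H_max.
have p_gt0 : (0 < p)%N by apply: ltnW.
have size_gt0 : (0 < size ks)%N by rewrite size_ks.
have k0_gt0 : (0 < nth 0%N ks (Ordinal size_gt0))%N.
  by apply: (allP ks_gt0); exact: mem_nth.
have turan_free : free_of (@SB_edge ks p) (turan_graph n p).
  apply: (free_of_contains (SB_contains_complete ks p k0_gt0)).
  exact: turan_graph_complete_free.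
apply: le_trans (mul_divn_lower_bound R n p p_gt0) _.
apply: le_trans (turan_graph_spec_rad_ge R n p) _.
exact: H_max (turan_graph_simple n p) turan_free.
Qed.
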